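(* Let $X,Z\in\mathbb{R}^{n\times r}$ with $\mathbf{e}:=\mathrm{vec}(XX^{T}-ZZ^{T})\ne0$ and $\sigma_{r}(X)>0$, and let $\alpha=\|Z_{\perp}Z_{\perp}^{T}\|_{F}/\|XX^{T}-ZZ^{T}\|_{F}$ where $Z_{\perp}=(I-XX^{\dagger})Z$. Then for every $w\in\mathbb{R}^{n^{2}}$ with $\|\mathbf{e}\|\,\|(I-\mathbf{J}\mathbf{J}^{\dagger})w\|\le1$, $$\max_{y\in\mathbb{R}^{nr}}\{\mathbf{e}^{T}(\mathbf{J}y-w):\|\mathbf{e}\|\,\|\mathbf{J}y-w\|=1\}=\sqrt{1-\alpha^{2}}\sqrt{1-\|\mathbf{e}\|^{2}\|(I-\mathbf{J}\mathbf{J}^{\dagger})w\|^{2}}-\mathbf{e}^{T}(I-\mathbf{J}\mathbf{J}^{\dagger})w.$$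
   Context: $\mathrm{vec}$ is column-stacking vectorization; $\mathbf{J}\in\mathbb{R}^{n^{2}\times nr}$ satisfies $\mathbf{J}\,\mathrm{vec}(Y)=\mathrm{vec}(XY^{T}+YX^{T})$ for all $Y\in\mathbb{R}^{n\times r}$; $\dagger$ denotes the Moore–Penrose pseudoinverse; $\sigma_{r}(X)$ is the $r$-th largest singular value of $X$. *)

From HB Require Import structures.
From mathcomp Require Import all_boot all_order all_algebra.
From mathcomp Require Import reals.
From Stdlib Require Import ClassicalEpsilon.
Set Implicit Arguments. Unset Strict Implicit. Unset Printing Implicit Defensive.
Import Order.TTheory GRing.Theory Num.Theory.
Local Open Scope ring_scope.

Section Defs.
Variable R : realType.

(* column-stacking vectorization: vec A = mxvec (A^T), as a column vector *)
Definition vec (m c : nat) (A : 'M[R]_(m, c)) : 'cV[R]_(c * m) := (mxvec A^T)^T.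

Definition fnorm (m c : nat) (A : 'M[R]_(m, c)) : R :=
  Num.sqrt (\sum_(i < m) \sum_(j < c) A i j ^+ 2).

Definition dotv (N : nat) (u v : 'cV[R]_N) : R := \sum_(i < N) u i 0 * v i 0.

Definition penrose (m c : nat) (A : 'M[R]_(m, c)) (B : 'M[R]_(c, m)) : Prop :=
  [/\ A *m B *m A = A, B *m A *m B = B,
      (A *m B)^T = A *m B & (B *m A)^T = B *m A].

Definition pinv (m c : nat) (A : 'M[R]_(m, c)) : 'M[R]_(c, m) :=
  epsilon (inhabits 0) (penrose A).
End Defs.

(* With Q = I - X X^+, the symmetric error S = X X^T - Z Z^T splits as
   (S - Q S Q) + Q S Q.  The first part lies in the range of the Lyapunov map
   Y |-> X Y^T + Y X^T, i.e. of J after vectorisation, while Q S Q = - Z_perp Z_perp^T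
   is orthogonal to that range.  Hence J J^+ e = e - vec (Q S Q), and
   |J J^+ e| = sqrt (1 - alpha^2) |e| by Pythagoras.
   Next, J y - w = J (y - J^+ w) - (I - J J^+) w is an orthogonal sum, so the
   constraint fixes |J (y - J^+ w)| and the objective is <J J^+ e, J (y - J^+ w)>
   up to a constant.  By Cauchy-Schwarz the maximum is attained when
   J (y - J^+ w) is a nonnegative multiple of J J^+ e (or of any nonzero vector
   of the range of J when J J^+ e = 0). *)

From HB Require Import structures.
From mathcomp Require Import all_boot all_order all_algebra.
From mathcomp Require Import reals.
From Stdlib Require Import ClassicalEpsilon.
From mathcomp Require Import ring.
Set Implicit Arguments. Unset Strict Implicit. Unset Printing Implicit Defensive.
Import Order.TTheory GRing.Theory Num.Theory.
Local Open Scope ring_scope.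

Section Euclidean.
Variable R : realType.
Implicit Types a : R.

Lemma dotvE N (u v : 'cV[R]_N) : dotv u v = (u^T *m v) 0 0.
Proof. by rewrite /dotv mxE; apply: eq_bigr => i _; rewrite mxE. Qed.

Lemma dotvC N (u v : 'cV[R]_N) : dotv u v = dotv v u.
Proof. by rewrite /dotv; apply: eq_bigr => i _; rewrite mulrC. Qed.

Lemma dotvDr N (u v c : 'cV[R]_N) : dotv u (v + c) = dotv u v + dotv u c.
Proof. by rewrite !dotvE mulmxDr mxE. Qed.

Lemma dotvNr N (u v : 'cV[R]_N) : dotv u (- v) = - dotv u v.
Proof. by rewrite !dotvE mulmxN mxE. Qed.

Lemma dotvBr N (u v c : 'cV[R]_N) : dotv u (v - c) = dotv u v - dotv u c.
Proof. by rewrite dotvDr dotvNr. Qed.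

Lemma dotvZr N (u v : 'cV[R]_N) a : dotv u (a *: v) = a * dotv u v.
Proof. by rewrite !dotvE -scalemxAr mxE. Qed.

Lemma dotv0r N (u : 'cV[R]_N) : dotv u 0 = 0.
Proof. by rewrite dotvE mulmx0 mxE. Qed.

Lemma dotv_mulmxl N K (A : 'M[R]_(N, K)) (x : 'cV[R]_K) (v : 'cV[R]_N) :
  dotv (A *m x) v = dotv x (A^T *m v).
Proof. by rewrite !dotvE trmx_mul -mulmxA. Qed.

Lemma dotv_ge0 N (u : 'cV[R]_N) : 0 <= dotv u u.
Proof. by rewrite /dotv; apply: sumr_ge0 => i _; rewrite -expr2 sqr_ge0. Qed.

Lemma dotv_eq0 N (u : 'cV[R]_N) : (dotv u u == 0) = (u == 0).
Proof.
apply/idP/eqP => [|->]; last by rewrite dotv0r.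
rewrite psumr_eq0 => [/allP u0|i _]; last by rewrite -expr2 sqr_ge0.
apply/matrixP => i j; rewrite (ord1 j) mxE.
by have := u0 i (mem_index_enum _); rewrite -expr2 sqrf_eq0 => /eqP.
Qed.

Lemma fnorm_cV N (u : 'cV[R]_N) : fnorm u = Num.sqrt (dotv u u).
Proof. by congr Num.sqrt; apply: eq_bigr => i _; rewrite big_ord1 expr2. Qed.

Lemma fnorm_ge0 N (u : 'cV[R]_N) : 0 <= fnorm u.
Proof. exact: sqrtr_ge0. Qed.

Lemma dotvv N (u : 'cV[R]_N) : dotv u u = fnorm u ^+ 2.
Proof. by rewrite fnorm_cV sqr_sqrtr ?dotv_ge0. Qed.

Lemma fnorm_eq0 N (u : 'cV[R]_N) : (fnorm u == 0) = (u == 0).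
Proof. by rewrite fnorm_cV sqrtr_eq0 le_eqVlt ltNge dotv_ge0 orbF dotv_eq0. Qed.

Lemma fnorm0 N : fnorm (0 : 'cV[R]_N) = 0.
Proof. by apply/eqP; rewrite fnorm_eq0. Qed.

Lemma fnormZ N a (u : 'cV[R]_N) : fnorm (a *: u) = `|a| * fnorm u.
Proof.
rewrite !fnorm_cV dotvZr dotvC dotvZr mulrA -expr2 sqrtrM ?sqr_ge0 //.
by rewrite sqrtr_sqr.
Qed.

Lemma fnormN N (u : 'cV[R]_N) : fnorm (- u) = fnorm u.
Proof. by rewrite -scaleN1r fnormZ normrN normr1 mul1r. Qed.

Lemma dotv_le_fnorm N (u v : 'cV[R]_N) : dotv u v <= fnorm u * fnorm v.
Proof.
have [->|v0] := eqVneq v 0; first by rewrite dotv0r mulr_ge0 ?fnorm_ge0.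
have vv : 0 < dotv v v by rewrite lt_def dotv_eq0 v0 dotv_ge0.
have : 0 <= dotv v v * (dotv u u * dotv v v - dotv u v ^+ 2).
  set x := dotv v v *: u - dotv u v *: v.
  have := dotv_ge0 x; rewrite {1}/x dotvBr !dotvZr (dotvC x u) (dotvC x v).
  by rewrite /x !dotvBr !dotvZr (dotvC v u); congr (_ <= _); ring.
rewrite pmulr_rge0 // subr_ge0 !dotvv -exprMn => uv_le.
apply: le_trans (ler_norm _) _.
rewrite -sqrtr_sqr -[leRHS]ger0_norm ?mulr_ge0 ?fnorm_ge0 // -sqrtr_sqr.
by rewrite ler_sqrt ?sqr_ge0.
Qed.

Lemma fnormD_orth N (u c : 'cV[R]_N) :
  dotv u c = 0 -> fnorm (u + c) ^+ 2 = fnorm u ^+ 2 + fnorm c ^+ 2.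
Proof.
move=> uc; rewrite -!dotvv dotvDr (dotvC _ u) (dotvC _ c) !dotvDr.
by rewrite (dotvC c u) uc addr0 add0r.
Qed.

End Euclidean.

Section PseudoInverse.
Variable R : realType.

Lemma mulmx_trmx_eq0 p q (A : 'M[R]_(p, q)) : (A *m A^T == 0) = (A == 0).
Proof.
apply/eqP/eqP => [AAt0|->]; last by rewrite mul0mx.
apply/matrixP => i j; rewrite mxE.
have /eqP : (A *m A^T) i i = 0 by rewrite AAt0 mxE.
rewrite mxE psumr_eq0 => [/allP Ai0|k _]; last by rewrite mxE -expr2 sqr_ge0.
by have := Ai0 j (mem_index_enum _); rewrite mxE -expr2 sqrf_eq0 => /eqP.
Qed.

Lemma row_free_mulmx_trmx_unit p q (D : 'M[R]_(p, q)) :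
  row_free D -> D *m D^T \in unitmx.
Proof.
move=> freeD; rewrite -row_free_unit -kermx_eq0; apply/eqP.
set K := kermx _; have KDDt0 : K *m (D *m D^T) = 0 := mulmx_ker _.
have /eqP : (K *m D) *m (K *m D)^T = 0.
  by rewrite trmx_mul !mulmxA -(mulmxA K) KDDt0 mul0mx.
rewrite mulmx_trmx_eq0 => /eqP KD0.
by apply: (row_free_inj freeD); rewrite KD0 mul0mx.
Qed.

Lemma penrose_full_rank_factor m k c (C : 'M[R]_(m, k)) (F : 'M[R]_(k, c)) :
  C^T *m C \in unitmx -> F *m F^T \in unitmx ->
  penrose (C *m F) (F^T *m invmx (F *m F^T) *m (invmx (C^T *m C) *m C^T)).
Proof.
set G := C^T *m C; set H := F *m F^T => uG uH.
have FH : F *m (F^T *m invmx H) = 1%:M by rewrite mulmxA mulmxV.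
have GC : invmx G *m C^T *m C = 1%:M by rewrite -mulmxA mulVmx.
have Gs : (invmx G)^T = invmx G by rewrite trmx_inv /G trmx_mul trmxK.
have Hs : (invmx H)^T = invmx H by rewrite trmx_inv /H trmx_mul trmxK.
set B := F^T *m _ *m _.
have AB : C *m F *m B = C *m (invmx G *m C^T).
  by rewrite mulmxA -(mulmxA C) FH mulmx1.
have BA : B *m (C *m F) = F^T *m invmx H *m F.
  by rewrite -[LHS]mulmxA (mulmxA _ C) GC mul1mx.
split.
- by rewrite AB mulmxA -(mulmxA C) GC mulmx1.
- by rewrite BA -(mulmxA _ F) (mulmxA F) FH mul1mx.
- by rewrite AB !trmx_mul trmxK Gs mulmxA.
- by rewrite BA !trmx_mul trmxK Hs mulmxA.
Qed.

Lemma pinvP m c (A : 'M[R]_(m, c)) : penrose A (pinv A).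
Proof.
apply: epsilon_spec; rewrite -[A]mulmx_base.
eexists; apply: penrose_full_rank_factor.
  rewrite -{2}[col_base A]trmxK; apply: row_free_mulmx_trmx_unit.
  by rewrite /row_free mxrank_tr; apply: col_base_full.
exact/row_free_mulmx_trmx_unit/row_base_free.
Qed.

Section Projector.
Variables (m c : nat) (A : 'M[R]_(m, c)).

Lemma pinv_proj_tr : (A *m pinv A)^T = A *m pinv A.
Proof. by case: (pinvP A). Qed.

Lemma pinv_projK : A *m pinv A *m A = A.
Proof. by case: (pinvP A). Qed.

Lemma pinv_proj_mulmx (y : 'cV[R]_c) : A *m pinv A *m (A *m y) = A *m y.
Proof. by rewrite mulmxA pinv_projK. Qed.

Lemma pinv_proj_id : A *m pinv A *m (A *m pinv A) = A *m pinv A.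
Proof. by rewrite mulmxA pinv_projK. Qed.

Lemma pinv_proj_orth (q : 'cV[R]_m) :
  (forall y, dotv q (A *m y) = 0) -> A *m pinv A *m q = 0.
Proof.
move=> q_orth; apply/eqP; rewrite -dotv_eq0 dotv_mulmxl pinv_proj_tr.
by rewrite mulmxA pinv_proj_id -mulmxA q_orth.
Qed.

Lemma dotv_pinv_proj_compl (y : 'cV[R]_c) (v : 'cV[R]_m) :
  dotv (A *m y) ((1%:M - A *m pinv A) *m v) = 0.
Proof.
have AtP : A^T *m (A *m pinv A) = A^T.
  by rewrite -{1}pinv_proj_tr -trmx_mul pinv_projK.
by rewrite dotv_mulmxl mulmxA mulmxBr mulmx1 AtP subrr mul0mx dotv0r.
Qed.

End Projector.
End PseudoInverse.

Section Vectorization.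
Variable R : realType.

Lemma vecD m c (A B : 'M[R]_(m, c)) : vec (A + B) = vec A + vec B.
Proof. by rewrite /vec !linearD. Qed.

Lemma vecN m c (A : 'M[R]_(m, c)) : vec (- A) = - vec A.
Proof. by rewrite /vec !linearN. Qed.

Lemma vec_onto m c (v : 'cV[R]_(c * m)) : exists A : 'M[R]_(m, c), vec A = v.
Proof. by exists (vec_mx v^T)^T; rewrite /vec trmxK vec_mxK trmxK. Qed.

Lemma vec_eq0 m c (A : 'M[R]_(m, c)) : (vec A == 0) = (A == 0).
Proof. by rewrite /vec trmx_eq0 mxvec_eq0 trmx_eq0. Qed.

Lemma dotv_vec m c (A B : 'M[R]_(m, c)) :
  dotv (vec A) (vec B) = \sum_(i < m) \sum_(j < c) A i j * B i j.
Proof.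
rewrite /dotv (reindex (uncurry (@mxvec_index c m))); last first.
  by have [g gK Kg] := curry_mxvec_bij c m; exists g => x _; [exact: gK | exact: Kg].
rewrite exchange_big pair_big /=; apply: eq_bigr => -[j i] _ /=.
by rewrite !mxE !mxvecE !mxE.
Qed.

Lemma fnorm_vec m c (A : 'M[R]_(m, c)) : fnorm (vec A) = fnorm A.
Proof. by rewrite fnorm_cV dotv_vec /fnorm. Qed.

Lemma dotv_vec_mxtrace m c (A B : 'M[R]_(m, c)) :
  dotv (vec A) (vec B) = \tr (A *m B^T).
Proof.
rewrite dotv_vec; apply: eq_bigr => i _; rewrite mxE.
by apply: eq_bigr => j _; rewrite mxE.
Qed.

End Vectorization.

Section LyapunovRange.
Variables (R : realType) (n r : nat) (X : 'M[R]_(n, r)).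
Local Notation Q := (1%:M - X *m pinv X).

Lemma proj_compl_tr : Q^T = Q.
Proof. by rewrite linearB /= trmx1 pinv_proj_tr. Qed.

Lemma proj_compl_mulmx : Q *m X = 0.
Proof. by rewrite mulmxBl mul1mx pinv_projK subrr. Qed.

Lemma trmx_mulmx_proj_compl : X^T *m Q = 0.
Proof. by rewrite -proj_compl_tr -trmx_mul proj_compl_mulmx trmx0. Qed.

(* With P = X X^+ = 1 - Q, the witness has Y X^T = Q S P + P S P / 2, so that
   X Y^T + Y X^T = Q S P + P S Q + P S P = S - Q S Q. *)
Lemma lyapunov_proj_compl (S : 'M[R]_n) : S^T = S ->
  exists Y : 'M[R]_(n, r), X *m Y^T + Y *m X^T = S - Q *m S *m Q.
Proof.
move=> Ss; have Pt := pinv_proj_tr X.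
set B := pinv X in Pt *; set P := X *m B in Pt *.
exists ((1%:M - P) *m S *m B^T + 2^-1 *: (X *m (B *m S *m B^T))).
set Y := (1%:M - P) *m S *m B^T + _.
have BtXt : B^T *m X^T = P by rewrite -trmx_mul Pt.
have YXt : Y *m X^T = (1%:M - P) *m S *m P + 2^-1 *: (P *m S *m P).
  by rewrite [LHS]mulmxDl -scalemxAl -!mulmxA BtXt !mulmxA.
have -> : X *m Y^T = (Y *m X^T)^T by rewrite trmx_mul trmxK.
have Qt : (1%:M - P)^T = 1%:M - P by rewrite linearB /= trmx1 Pt.
rewrite YXt linearD /= linearZ /= !trmx_mul Ss !BtXt Qt.
rewrite ?(mulmxBl, mulmxBr, mul1mx, mulmx1) !mulmxA.
move: (P *m S *m P) (P *m S) (S *m P) => PSP PS SP.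
by apply/matrixP => i j; rewrite !mxE; field.
Qed.

Lemma dotv_vec_proj_compl (M : 'M[R]_n) (Y : 'M[R]_(n, r)) :
  dotv (vec (Q *m M *m Q)) (vec (X *m Y^T + Y *m X^T)) = 0.
Proof.
rewrite dotv_vec_mxtrace [(_ + _)^T]linearD /= !trmx_mul !trmxK.
rewrite [_ *m (Y *m _ + _)]mulmxDr mxtraceD.
rewrite [_ *m (X *m _)]mulmxA -[_ *m Q *m X]mulmxA proj_compl_mulmx.
rewrite mulmx0 mul0mx mxtrace0 addr0 mulmxA mxtrace_mulC !mulmxA.
by rewrite trmx_mulmx_proj_compl !mul0mx mxtrace0.
Qed.

Lemma mulmx_gram_diff_trmx (A : 'M[R]_n) (Z : 'M[R]_(n, r)) : A *m X = 0 ->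
  A *m (X *m X^T - Z *m Z^T) *m A^T = - ((A *m Z) *m (A *m Z)^T).
Proof.
move=> AX0; rewrite mulmxBr mulmxBl !mulmxA AX0 !mul0mx sub0r.
by rewrite trmx_mul !mulmxA.
Qed.

Variable J : 'M[R]_(n * n, r * n).
Hypothesis vec_lyapunov : forall Y, J *m vec Y = vec (X *m Y^T + Y *m X^T).

Lemma fnorm_vec_lyapunov_split (S : 'M[R]_n) : S^T = S ->
  fnorm (vec S) ^+ 2 =
  fnorm (J *m pinv J *m vec S) ^+ 2 + fnorm (vec (Q *m S *m Q)) ^+ 2.
Proof.
move=> Ss; have [Y SE] := lyapunov_proj_compl Ss.
have QSQ_orth y : dotv (vec (Q *m S *m Q)) (J *m y) = 0.
  by have [Y' <-] := vec_onto y; rewrite vec_lyapunov dotv_vec_proj_compl.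
have vecSE : vec S = J *m vec Y + vec (Q *m S *m Q).
  by rewrite vec_lyapunov SE -vecD subrK.
rewrite {1}vecSE fnormD_orth ?(dotvC (J *m _)) // vecSE [_ *m (J *m _ + _)]mulmxDr.
by rewrite pinv_proj_mulmx pinv_proj_orth // addr0.
Qed.

Lemma lyapunov_map_neq0 : X != 0 -> J != 0.
Proof.
apply: contra => /eqP J0; have := vec_lyapunov X; rewrite J0 mul0mx => /esym/eqP.
by rewrite vec_eq0 -mulr2n -scaler_nat scaler_eq0 pnatr_eq0 mulmx_trmx_eq0.
Qed.

End LyapunovRange.

Section AffineMax.
Variables (R : realType) (N K : nat) (J : 'M[R]_(N, K)) (e w : 'cV[R]_N).
Local Notation P := (J *m pinv J).
Local Notation c := ((1%:M - J *m pinv J) *m w).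

Lemma residualE y : J *m y - w = J *m (y - pinv J *m w) - c.
Proof. by rewrite mulmxBl mul1mx mulmxBr mulmxA opprB addrA subrK. Qed.

Lemma fnorm_residual y :
  fnorm (J *m y - w) ^+ 2 = fnorm (J *m (y - pinv J *m w)) ^+ 2 + fnorm c ^+ 2.
Proof.
by rewrite residualE fnormD_orth ?fnormN // dotvNr dotv_pinv_proj_compl oppr0.
Qed.

Lemma dotv_residual y :
  dotv e (J *m y - w) = dotv (P *m e) (J *m (y - pinv J *m w)) - dotv e c.
Proof. by rewrite residualE dotvBr dotv_mulmxl pinv_proj_tr pinv_proj_mulmx. Qed.

Lemma residual_constraint y :
  fnorm e * fnorm (J *m y - w) = 1 <->
  (fnorm e * fnorm (J *m (y - pinv J *m w))) ^+ 2 = 1 - fnorm e ^+ 2 * fnorm c ^+ 2.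
Proof.
split=> [|h].
  move/(congr1 (fun x => x ^+ 2)); rewrite expr1n !exprMn fnorm_residual mulrDr.
  by move=> h; apply: (addIr (fnorm e ^+ 2 * fnorm c ^+ 2)); rewrite subrK.
apply/eqP; rewrite -sqrp_eq1 ?mulr_ge0 ?fnorm_ge0 // exprMn fnorm_residual.
by rewrite mulrDr -exprMn h subrK.
Qed.

Lemma exists_aligned_in_range : J != 0 -> exists y,
  J *m y != 0 /\ dotv (P *m e) (J *m y) = fnorm (P *m e) * fnorm (J *m y).
Proof.
move=> J0; have [Pe0|Pe0] := eqVneq (P *m e) 0; last first.
  by exists (pinv J *m e); rewrite mulmxA dotvv expr2.
have /existsP[j Jj0] : [exists j, col j J != 0].
  apply: contraNT J0 => /existsPn Jcols0.
  apply/eqP/matrixP => i j; have /negPn/eqP/matrixP/(_ i 0) := Jcols0 j.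
  by rewrite !mxE.
by exists (delta_mx j 0); rewrite -colE Pe0 dotvC dotv0r fnorm0 mul0r.
Qed.

Hypothesis e_neq0 : e != 0.

Let fnorm_e_gt0 : 0 < fnorm e.
Proof. by rewrite lt_def fnorm_eq0 e_neq0 fnorm_ge0. Qed.

Lemma dotv_residual_le y : fnorm e * fnorm (J *m y - w) = 1 ->
  dotv e (J *m y - w) <=
  fnorm (P *m e) / fnorm e * Num.sqrt (1 - fnorm e ^+ 2 * fnorm c ^+ 2) - dotv e c.
Proof.
move/residual_constraint => <-.
rewrite sqrtr_sqr ger0_norm ?mulr_ge0 ?fnorm_ge0 // dotv_residual lerD2r.
by rewrite mulrA divfK ?gt_eqF // dotv_le_fnorm.
Qed.

Lemma dotv_residual_attained : J != 0 -> fnorm e * fnorm c <= 1 -> exists y,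
  fnorm e * fnorm (J *m y - w) = 1 /\ dotv e (J *m y - w) =
  fnorm (P *m e) / fnorm e * Num.sqrt (1 - fnorm e ^+ 2 * fnorm c ^+ 2) - dotv e c.
Proof.
move=> J0 ec_le1; have [y1 [Jy1_neq0 aligned]] := exists_aligned_in_range J0.
set v := J *m y1 in Jy1_neq0 aligned.
have v_gt0 : 0 < fnorm v by rewrite lt_def fnorm_eq0 Jy1_neq0 fnorm_ge0.
set k := Num.sqrt _.
set t := k / (fnorm e * fnorm v).
have t_ge0 : 0 <= t by rewrite divr_ge0 ?sqrtr_ge0 ?mulr_ge0 ?fnorm_ge0.
have Jy_res : J *m (t *: y1 + pinv J *m w - pinv J *m w) = t *: v.
  by rewrite addrK -scalemxAr.
have etv : fnorm e * fnorm (t *: v) = k.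
  by rewrite fnormZ ger0_norm // /t; field; rewrite !gt_eqF.
exists (t *: y1 + pinv J *m w); split.
  apply/residual_constraint; rewrite Jy_res etv sqr_sqrtr // subr_ge0 -exprMn.
  by rewrite exprn_ile1 ?mulr_ge0 ?fnorm_ge0.
rewrite dotv_residual Jy_res dotvZr aligned; congr (_ - _).
by rewrite /t; field; rewrite !gt_eqF.
Qed.

End AffineMax.

Lemma sqrtr_1_sub_sqr_div (R : rcfType) (a x y : R) :
  0 < a -> 0 <= y -> a ^+ 2 = y ^+ 2 + x ^+ 2 ->
  Num.sqrt (1 - (x / a) ^+ 2) = y / a.
Proof.
move=> a_gt0 y_ge0 pyth.
have -> : 1 - (x / a) ^+ 2 = (y / a) ^+ 2.
  apply/eqP; rewrite !expr_div_n subr_eq -mulrDl -pyth divff //.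
  by rewrite expf_neq0 // gt_eqF.
by rewrite sqrtr_sqr ger0_norm // divr_ge0 // ltW.
Qed.

Unset Implicit Arguments.
Set Strict Implicit.

Theorem lemma17 (R : realType) (n r : nat) (X Z : 'M[R]_(n, r))
  (J : 'M[R]_(n * n, r * n))
  (HJ : forall Y : 'M[R]_(n, r), J *m vec Y = vec (X *m Y^T + Y *m X^T))
  (he : vec (X *m X^T - Z *m Z^T) != 0)
  (hX : \rank X = r)
  (w : 'cV[R]_(n * n)) :
  let e := vec (X *m X^T - Z *m Z^T) in
  let Zp := (1%:M - X *m pinv X) *m Z in
  let alpha := fnorm (Zp *m Zp^T) / fnorm (X *m X^T - Z *m Z^T) in
  let Pw := (1%:M - J *m pinv J) *m w in
  let M := Num.sqrt (1 - alpha ^+ 2) * Num.sqrt (1 - fnorm e ^+ 2 * fnorm Pw ^+ 2)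
           - dotv e Pw in
  fnorm e * fnorm Pw <= 1 ->
  (exists y : 'cV[R]_(r * n),
      fnorm e * fnorm (J *m y - w) = 1 /\ dotv e (J *m y - w) = M) /\
  (forall y : 'cV[R]_(r * n),
      fnorm e * fnorm (J *m y - w) = 1 -> dotv e (J *m y - w) <= M).
Proof.
cbv zeta => ePw_le1.
set S := X *m X^T - Z *m Z^T in he ePw_le1 *.
set e := vec S in he ePw_le1 *.
set Q := 1%:M - X *m pinv X.
have Ss : S^T = S by rewrite /S linearB /= !trmx_mul !trmxK.
have QSQ : Q *m S *m Q = - ((Q *m Z) *m (Q *m Z)^T).
  by rewrite -(mulmx_gram_diff_trmx (X := X)) ?proj_compl_tr ?proj_compl_mulmx.
have alphaE : Num.sqrt (1 - (fnorm ((Q *m Z) *m (Q *m Z)^T) / fnorm S) ^+ 2) =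
    fnorm (J *m pinv J *m e) / fnorm e.
  rewrite -[fnorm S]fnorm_vec -fnorm_vec -fnormN -vecN -QSQ.
  apply: sqrtr_1_sub_sqr_div; rewrite ?fnorm_ge0 //.
    by rewrite lt_def fnorm_eq0 he fnorm_ge0.
  by rewrite /e /Q (fnorm_vec_lyapunov_split HJ Ss).
have J_neq0 : J != 0.
  apply: lyapunov_map_neq0 HJ _; apply: contra he => /eqP X0.
  have r0 : r = 0%N by rewrite -hX X0 mxrank0.
  by subst r; rewrite vec_eq0 /S X0 (thinmx0 Z) !mul0mx subrr.
split; first by have := dotv_residual_attained he J_neq0 ePw_le1; rewrite alphaE.
by move=> y /(dotv_residual_le he); rewrite alphaE.
Qed.
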